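(* Let $P$ be a positive event pattern, $I$ an event stream, and $G=(V,\mathcal{E})$ the GRETA graph of $P$ and $I$. For $e \in V$ let $Pr(e)=\{p \in V : (p,e)\in\mathcal{E}\}$ be its predecessor events, and define $e.count$ recursively in order of increasing time by $$e.count = [\,e.type = start(P)\,] + \sum_{p \in Pr(e)} p.count,$$ where $[\cdot]$ is $1$ if the condition holds and $0$ otherwise. Then (1) for every $e \in V$, $e.count$ equals the number of directed paths in $G$ (including the one-vertex path) that start at a vertex of type $start(P)$ and end at $e$; and (2) $final\_count := \sum_{e \in V,\ e.type = end(P)} e.count$ equals the number of directed paths in $G$ from a vertex of type $start(P)$ to a vertex of type $end(P)$, i.e., the number of trends captured by $G$.
   Context: Events: each event $e$ has an event type $e.type$ and an occurrence time $e.time \in \mathbb{Q}_{\ge 0}$. An event stream $I$ is a finite collection of distinct events arriving in nondecreasing order of time. Positive patterns: an event type $E$ is a pattern; if $P_i,P_j$ are patterns then $P_i+$ and $\mathsf{SEQ}(P_i,P_j)$ are patterns; each event type occurs at most once in a pattern. Matches over $I$: $matches(E)=\{(e): e\in I, e.type=E\}$; $(e_1,\dots,e_k)\in matches(\mathsf{SEQ}(P_i,P_j))$ iff for some $1\le m\le k$, $(e_1,\dots,e_m)\in matches(P_i)$, $(e_{m+1},\dots,e_k)\in matches(P_j)$ and $e_1.time<\dots<e_k.time$; $matches(P_i+)$ consists of concatenations $s_1\cdots s_k$ ($k\ge1$) with each $s_l\in matches(P_i)$ and the last event of $s_l$ strictly earlier than the first event of $s_{l+1}$. Trends matched by $P$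 in $I$ are the elements of $matches(P)$. Define $start(E)=end(E)=E$, $start(P_i+)=start(P_i)$, $end(P_i+)=end(P_i)$, $start(\mathsf{SEQ}(P_i,P_j))=start(P_i)$, $end(\mathsf{SEQ}(P_i,P_j))=end(P_j)$. The GRETA graph $G=(V,\mathcal{E})$ has as vertices the events of $I$ occurring in at least one trend matched by $P$ in $I$, and an edge $(e_i,e_j)$ iff $e_i,e_j$ are consecutive events, in this order, in some trend matched by $P$ in $I$ (so every edge goes strictly forward in time and $G$ is acyclic). *)

From mathcomp Require Import all_boot all_order all_algebra.
From mathcomp Require Import boolp.
Set Implicit Arguments. Unset Strict Implicit. Unset Printing Implicit Defensive.
Import Order.TTheory GRing.Theory Num.Theory.

(** Events: (identifier, event type, occurrence time).  The identifier lets
    distinct events share a type and a time. Event types are naturals. *)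
Definition event := (nat * nat * rat)%type.
Definition eid (e : event) : nat := e.1.1.
Definition etype (e : event) : nat := e.1.2.
Definition etime (e : event) : rat := e.2.

Definition is_stream (I : seq event) : Prop :=
  uniq I /\ (forall e, e \in I -> (0 <= etime e)%R) /\
  sorted (fun a b => (etime a <= etime b)%R) I.

Inductive pattern : Type :=
| PEv of nat
| PPlus of pattern
| PSeq of pattern & pattern.

Fixpoint ptypes (P : pattern) : seq nat :=
  match P with
  | PEv E => [:: E]
  | PPlus Q => ptypes Q
  | PSeq Q R => ptypes Q ++ ptypes R
  end.

Definition wf_pattern (P : pattern) : Prop := uniq (ptypes P).

Fixpoint pstart (P : pattern) : nat :=
  match P with
  | PEv E => E
  | PPlus Q => pstart Q
  | PSeq Q _ => pstart Q
  end.

Fixpoint pend (P : pattern) : nat :=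
  match P with
  | PEv E => E
  | PPlus Q => pend Q
  | PSeq _ R => pend R
  end.

Definition before (s t : seq event) : Prop :=
  match rev s, t with
  | a :: _, b :: _ => (etime a < etime b)%R
  | _, _ => False
  end.

Inductive matches (I : seq event) : pattern -> seq event -> Prop :=
| m_ev (E : nat) (e : event) :
    e \in I -> etype e = E -> matches I (PEv E) [:: e]
| m_seq (Q R : pattern) (s1 s2 : seq event) :
    matches I Q s1 -> matches I R s2 ->
    sorted (fun a b => (etime a < etime b)%R) (s1 ++ s2) ->
    matches I (PSeq Q R) (s1 ++ s2)
| m_plus1 (Q : pattern) (s : seq event) :
    matches I Q s -> matches I (PPlus Q) s
| m_plusS (Q : pattern) (s t : seq event) :
    matches I Q s -> matches I (PPlus Q) t -> before s t ->
    matches I (PPlus Q) (s ++ t).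

Definition Vtx (P : pattern) (I : seq event) (e : event) : Prop :=
  exists s, matches I P s /\ e \in s.

Definition Edge (P : pattern) (I : seq event) (a b : event) : Prop :=
  exists s x y, matches I P s /\ s = x ++ a :: b :: y.

Fixpoint chain (E : event -> event -> Prop) (x : event) (s : seq event) : Prop :=
  match s with
  | [::] => True
  | y :: s' => E x y /\ chain E y s'
  end.

(** a directed path in G, given as the nonempty sequence of its vertices *)
Definition gpath (P : pattern) (I : seq event) (p : seq event) : Prop :=
  match p with
  | [::] => False
  | x :: s => (forall v, v \in p -> Vtx P I v) /\ chain (Edge P I) x s
  end.

Definition card_is (T : eqType) (S : T -> Prop) (n : nat) : Prop :=
  exists l : seq T, uniq l /\ (forall x, x \in l <-> S x) /\ size l = n.

From mathcomp Require Import all_boot all_order all_algebra.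
From mathcomp Require Import boolp.
Import Order.TTheory GRing.Theory Num.Theory.
Set Implicit Arguments. Unset Strict Implicit. Unset Printing Implicit Defensive.

(* Every edge of the GRETA graph goes strictly forward in time, so the graph
   is acyclic and we may argue by induction on the number of earlier events.
   A path from a start vertex to [e] is either the one-vertex path [e] (when
   [e] has the start type) or a path to a predecessor [p] of [e] extended by
   [e]; these cases are disjoint and the extension is injective, so the paths
   to [e] are counted exactly by the recursion defining [e.count].  Summing
   over the vertices of end type counts the trends. *)

Section CardIs.
Variable T : eqType.

Lemma card_is_ext (S S' : T -> Prop) n :
  card_is S n -> (forall x, S x <-> S' x) -> card_is S' n.
Proof.
by move=> [l [l_uniq [memS <-]]] eqS; exists l; split; [|split] => // x; rewrite memS.
Qed.

Lemma card_is0 : card_is (fun _ : T => False) 0.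
Proof. by exists [::]. Qed.

Lemma card_is1 (a : T) : card_is (fun x => x = a) 1.
Proof. by exists [:: a]; split; [|split] => // x; rewrite mem_seq1; split => [/eqP|->]. Qed.

Lemma card_is_union (S1 S2 : T -> Prop) n1 n2 :
  (forall x, S1 x -> S2 x -> False) -> card_is S1 n1 -> card_is S2 n2 ->
  card_is (fun x => S1 x \/ S2 x) (n1 + n2).
Proof.
move=> disj [l1 [uniq1 [mem1 <-]]] [l2 [uniq2 [mem2 <-]]].
exists (l1 ++ l2); split; [|split; last by rewrite size_cat].
- rewrite cat_uniq uniq1 uniq2 andbT /=.
  by apply/hasPn => x /mem2 S2x; apply/negP => /mem1 S1x; apply: disj S1x S2x.
- move=> x; rewrite mem_cat.
  by split => [/orP[/mem1|/mem2]|[/mem1|/mem2] ->]; rewrite ?orbT; auto.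
Qed.

Lemma card_is_bigU (J : eqType) (js : seq J) (F : J -> T -> Prop) (n : J -> nat) :
  uniq js -> (forall j, j \in js -> card_is (F j) (n j)) ->
  (forall j1 j2 x, F j1 x -> F j2 x -> j1 = j2) ->
  card_is (fun x => exists2 j, j \in js & F j x) (\sum_(j <- js) n j).
Proof.
elim: js => [|j js IH] /= js_uniq cardF disjF.
  by rewrite big_nil; apply: (card_is_ext card_is0) => x; split => [|[]].
case/andP: js_uniq => js'j js_uniq; rewrite big_cons.
have disj x : F j x -> (exists2 j', j' \in js & F j' x) -> False.
  by move=> Fjx [j' js_j' /(disjF _ _ _ Fjx) eq_jj']; rewrite eq_jj' js_j' in js'j.
have card_js :
    card_is (fun x => exists2 j', j' \in js & F j' x) (\sum_(j' <- js) n j').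
  by apply: IH js_uniq _ disjF => j' js_j'; apply: cardF; rewrite inE js_j' orbT.
apply: (card_is_ext (card_is_union disj (cardF j (mem_head _ _)) card_js)).
move=> x; split => [[Fjx|[j' js_j' Fj'x]]|[j']].
- by exists j; rewrite ?mem_head.
- by exists j'; rewrite // inE js_j' orbT.
- by rewrite inE => /orP[/eqP ->|js_j' Fj'x]; [left|right; exists j'].
Qed.

Lemma card_is_inj_image (U : eqType) (f : T -> U) (S : T -> Prop) n :
  injective f -> card_is S n -> card_is (fun y => exists2 x, S x & y = f x) n.
Proof.
move=> f_inj [l [l_uniq [memS <-]]]; exists (map f l).
split; [by rewrite map_inj_uniq|split; last by rewrite size_map].
by move=> y; split => [/mapP[x /memS Sx ->]|[x /memS Sx ->]]; [exists x|rewrite mem_map].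
Qed.

End CardIs.

Lemma count_lt_subpred (T : eqType) (a b : pred T) s x :
  subpred a b -> x \in s -> b x -> ~~ a x -> count a s < count b s.
Proof.
move=> sub_ab; elim: s => [|y s IH] //=; rewrite inE => /orP[/eqP <-|s_x] bx ax.
  by rewrite (negbTE ax) bx add0n add1n ltnS sub_count.
rewrite -addnS leq_add ?IH //.
by case: (a y) (sub_ab y) => // ->.
Qed.

Definition earlier (a b : event) : bool := (etime a < etime b)%R.

Lemma earlier_ind (I : seq event) (Q : event -> Prop) :
  (forall e, (forall q, q \in I -> earlier q e -> Q q) -> Q e) -> forall e, Q e.
Proof.
move=> IH e; have [n] := ubnP (count (earlier^~ e) I).
elim: n e => // n IHn e lt_e_n; apply: IH => q I_q q_e; apply: IHn.
rewrite -ltnS; apply: leq_trans lt_e_n; apply: (count_lt_subpred (x := q)) => //.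
- by move=> x /= x_q; apply: lt_trans x_q q_e.
- by rewrite /earlier /= ltxx.
Qed.

Lemma sorted_cat_before s t :
  sorted earlier s -> sorted earlier t -> before s t -> sorted earlier (s ++ t).
Proof.
case/lastP: s => [|s a] //; rewrite /before rev_rcons.
case: t => [|b t] // s_sorted t_sorted ab.
by rewrite cat_rcons sorted_cat_cons s_sorted /=; apply/andP; split.
Qed.

Lemma matches_sorted I P s : matches I P s -> sorted earlier s.
Proof. by elim => //= Q s1 s2 _ ? _ ? before12; apply: sorted_cat_before. Qed.

Lemma matches_sub I P s : matches I P s -> {subset s <= I}.
Proof.
elim => [E x I_x _ e /[1!inE] /eqP -> //|Q R s1 s2 _ sub1 _ sub2 _ e|//|
          Q s1 s2 _ sub1 _ sub2 _ e].
  by rewrite mem_cat => /orP[/sub1|/sub2].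
by rewrite mem_cat => /orP[/sub1|/sub2].
Qed.

Lemma Vtx_in P I e : Vtx P I e -> e \in I.
Proof. by case=> s [/matches_sub]; apply. Qed.

Lemma Edge_earlier P I a b : Edge P I a b -> earlier a b.
Proof.
case=> s [x [y [/matches_sorted + def_s]]].
by rewrite def_s sorted_cat_cons => /andP[_ /= /andP[]].
Qed.

Lemma Edge_Vtx P I a b : Edge P I a b -> Vtx P I a /\ Vtx P I b.
Proof.
by case=> s [x [y [m def_s]]]; split; exists s; split; rewrite // def_s mem_cat !inE eqxx ?orbT.
Qed.

Lemma chain_rcons (E : event -> event -> Prop) x s y :
  chain E x (rcons s y) <-> chain E x s /\ E (last x s) y.
Proof. by elim: s x => [|z s IH] x /=; [tauto|rewrite IH; tauto]. Qed.

Section GretaPaths.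
Variables (P : pattern) (I : seq event).

Lemma gpath1 e : gpath P I [:: e] <-> Vtx P I e.
Proof. by split => [[/(_ e (mem_head _ _))]|Ve]; last by split => // v /[!inE] /eqP ->. Qed.

Lemma gpath_rcons x s y :
  gpath P I (rcons (x :: s) y) <-> gpath P I (x :: s) /\ Edge P I (last x s) y.
Proof.
rewrite /gpath /= chain_rcons -rcons_cons.
split => [[V_xsy [chain_xs E_y]]|[[V_xs chain_xs] E_y]].
  by split=> //; split=> // v xs_v; apply: V_xsy; rewrite mem_rcons inE xs_v orbT.
split=> // v; rewrite mem_rcons inE => /orP[/eqP ->|]; [exact: (Edge_Vtx E_y).2|exact: V_xs].
Qed.

Definition start_path_to (e : event) (p : seq event) : Prop :=
  gpath P I p /\ etype (head e p) = pstart P /\ last e p = e.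

Definition preds (e : event) : seq event := [seq q <- undup I | `[< Edge P I q e >]].

Lemma start_path_to_inj e1 e2 p :
  start_path_to e1 p -> start_path_to e2 p -> e1 = e2.
Proof. by case: p => [[[]]|x s] [_ [_ <-]] [_ [_ <-]]. Qed.

Lemma start_path_toP e : Vtx P I e -> forall p, start_path_to e p <->
  (etype e = pstart P /\ p = [:: e]) \/
  exists2 q, q \in preds e & exists2 p', start_path_to q p' & p = rcons p' e.
Proof.
move=> Ve p; split.
- case/lastP: p => [[[]]|[|x s] y [+ [+]]]; rewrite last_rcons => + + <-.
    by left.
  move=> /gpath_rcons[path_xs E_e] start_x; right; exists (last x s).
    by rewrite mem_filter mem_undup (Vtx_in (Edge_Vtx E_e).1) andbT; apply/asboolP.
  by exists (x :: s).
- case=> [[start_e ->]|[q]]; first by split; [apply/gpath1|].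
  rewrite mem_filter => /andP[/asboolP E_qe _] [[[[]]|x s] [path_xs [start_x /= last_xs]] ->].
  split; last by rewrite /= last_rcons.
  by apply/gpath_rcons; rewrite last_xs.
Qed.

Variable cnt : event -> nat.
Hypothesis cntE : forall e, Vtx P I e ->
  cnt e = ((etype e == pstart P) : nat) + \sum_(p <- undup I | `[< Edge P I p e >]) cnt p.

Lemma card_start_paths_to e : Vtx P I e -> card_is (start_path_to e) (cnt e).
Proof.
elim/(@earlier_ind I): e => e IH Ve.
rewrite cntE // -big_filter.
apply: (card_is_ext _ (fun p => iff_sym (start_path_toP Ve p))).
apply: card_is_union.
- (* [rcons p' e = [:: e]] forces [p'] to be empty, which is not a path. *)
  by move=> _ [_ ->] [q _ [[|x [|z s]] [[]] //]].
- have [start_e|nstart_e] := eqVneq (etype e) (pstart P).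
    by apply: (card_is_ext (card_is1 [:: e])) => p; split=> [|[]].
  apply: (card_is_ext (card_is0 _)) => p.
  by split=> // [[/eqP]]; rewrite (negbTE nstart_e).
- apply: card_is_bigU; first by rewrite filter_uniq ?undup_uniq.
    move=> q; rewrite mem_filter mem_undup => /andP[/asboolP E_e I_q].
    apply: card_is_inj_image; first exact: rcons_injl.
    exact: IH I_q (Edge_earlier E_e) (Edge_Vtx E_e).1.
  move=> q1 q2 x [p1 path1 ->] [p2 path2 /(rcons_injl e) eq_p12].
  by apply: start_path_to_inj path1 _; rewrite eq_p12.
Qed.

Lemma card_trends :
  card_is (fun p => gpath P I p /\ etype (head (0, 0, 0%R) p) = pstart P /\
                    etype (last (0, 0, 0%R) p) = pend P)
          (\sum_(e <- undup I | `[< Vtx P I e /\ etype e = pend P >]) cnt e).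
Proof.
rewrite -big_filter; apply: (card_is_ext (card_is_bigU _ _ start_path_to_inj)).
- by rewrite filter_uniq ?undup_uniq.
- by move=> e; rewrite mem_filter => /andP[/asboolP[Ve _] _]; apply: card_start_paths_to.
move=> p; split => [[e /[!mem_filter] /andP[/asboolP[_ end_e] _] [path_p [start_p]]]|].
  by case: p path_p start_p => [[]|x s] path_p /= start_p ->.
case: p => [[[]]|x s [path_xs [start_x end_x]]].
have V_last : Vtx P I (last x s) := path_xs.1 _ (mem_last x s).
exists (last x s); last by [].
by rewrite mem_filter mem_undup (Vtx_in V_last) andbT; apply/asboolP.
Qed.

End GretaPaths.

Theorem theorem3 (P : pattern) (I : seq event) (count : event -> nat) :
  wf_pattern P -> is_stream I ->
  (* e.count is defined by the recursion below on the vertices of G *)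
  (forall e, Vtx P I e ->
     count e = ((etype e == pstart P) : nat)
               + \sum_(p <- undup I | `[< Edge P I p e >]) count p) ->
  (forall e, Vtx P I e ->
     card_is (fun p : seq event =>
                gpath P I p /\ etype (head e p) = pstart P /\ last e p = e)
             (count e))
  /\
  card_is (fun p : seq event =>
             gpath P I p /\ etype (head (0, 0, 0%R) p) = pstart P /\
             etype (last (0, 0, 0%R) p) = pend P)
          (\sum_(e <- undup I | `[< Vtx P I e /\ etype e = pend P >]) count e).
Proof.
move=> _ _ countE.
by split; [exact: card_start_paths_to|exact: card_trends].
Qed.
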